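(* Let $\trianglerighteq$ denote one of the relations $\ge,\le,=,>,<$ and $\vartriangleleft$ its negation. Let $F\subseteq\bar L^0(\mathcal G)$ and $Y_0\in\bar L^0(\mathcal G)$, and define $$\mathcal A=\{A\in\mathcal G:\ Y\trianglerighteq Y_0\text{ on }A\ \ \forall Y\in F\},\qquad \mathcal A^\vdash=\{A\in\mathcal G:\ \exists Y\in F\text{ with }Y\vartriangleleft Y_0\text{ on }A\}.$$ Assume that for every sequence of pairwise disjoint sets $A_i\in\mathcal A^\vdash$ and $Y_i\in F$ with $Y_i\vartriangleleft Y_0$ on $A_i$, one has $\sum_{i=1}^\infty Y_i\mathbf 1_{A_i}\in F$. Then there exist $A_M\in\mathcal A$ and $A_M^\vdash\in\mathcal A^\vdash$ with $\mathbb P(A_M\cap A_M^\vdash)=0$ and $\mathbb P(A_M\cup A_M^\vdash)=1$; in particular $Y\trianglerighteq Y_0$ on $A_M$ for all $Y\in F$, and $\overline Y\vartriangleleft Y_0$ on $A_M^\vdash$ for some $\overline Y\in F$.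
   Context: $(\Omega,\mathcal F,\mathbb P)$ is a probability space and $\mathcal G\subseteq\mathcal F$ a sub-$\sigma$-algebra. $\bar L^0(\mathcal G)$ denotes $\mathcal G$-measurable random variables with values in $\mathbb R\cup\{+\infty\}$. ''$Y\trianglerighteq Y_0$ on $A$'' means the relation holds $\mathbb P$-a.s. on $A$. *)

From Stdlib Require Import Reals.
Open Scope R_scope.

Definition set (T : Type) := T -> Prop.

Record is_sigma_algebra {Omega : Type} (S : set (set Omega)) : Prop := {
  sa_full  : S (fun _ => True);
  sa_compl : forall A, S A -> S (fun w => ~ A w);
  sa_union : forall A : nat -> set Omega,
               (forall n, S (A n)) -> S (fun w => exists n, A n w)
}.

Record ProbSpace := {
  Omega : Type;
  Fsig  : set (set Omega);
  Prob  : set Omega -> R;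
  Fsig_sigma : is_sigma_algebra Fsig;
  Prob_nonneg : forall A, Fsig A -> 0 <= Prob A;
  Prob_full : Prob (fun _ => True) = 1;
  Prob_sigma_additive : forall A : nat -> set Omega,
      (forall n, Fsig (A n)) ->
      (forall m n w, m <> n -> A m w -> A n w -> False) ->
      infinite_sum (fun n => Prob (A n)) (Prob (fun w => exists n, A n w))
}.

Definition sub_sigma_algebra (Ps : ProbSpace) (G : set (set (Omega Ps))) : Prop :=
  is_sigma_algebra G /\ forall A, G A -> Fsig Ps A.

Inductive ereal := Fin (r : R) | PInf.

Definition ele (x y : ereal) : Prop :=
  match x, y with
  | Fin a, Fin b => a <= b
  | _, PInf => True
  | PInf, Fin _ => False
  end.
Definition elt (x y : ereal) : Prop := ele x y /\ x <> y.

(* \bar L^0(G): G-measurable random variables with values in R \cup {+oo} *)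
Definition L0bar {Om : Type} (G : set (set Om)) (Y : Om -> ereal) : Prop :=
  forall r : R, G (fun w => ele (Y w) (Fin r)).

Inductive relation_kind := RGe | RLe | REq | RGt | RLt.

Definition rel_holds (k : relation_kind) (x y : ereal) : Prop :=
  match k with
  | RGe => ele y x
  | RLe => ele x y
  | REq => x = y
  | RGt => elt y x
  | RLt => elt x y
  end.

Definition rel_neg (k : relation_kind) (x y : ereal) : Prop := ~ rel_holds k x y.

(* "Y R Y0 on A": the relation holds P-a.s. on A *)
Definition holds_on (Ps : ProbSpace) (R0 : ereal -> ereal -> Prop)
    (Y Y0 : Omega Ps -> ereal) (A : set (Omega Ps)) : Prop :=
  exists N : set (Omega Ps), Fsig Ps N /\ Prob Ps N = 0 /\
    forall w, A w -> ~ N w -> R0 (Y w) (Y0 w).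

Definition calA (Ps : ProbSpace) (G : set (set (Omega Ps))) (k : relation_kind)
    (F : set (Omega Ps -> ereal)) (Y0 : Omega Ps -> ereal) (A : set (Omega Ps)) : Prop :=
  G A /\ forall Y, F Y -> holds_on Ps (rel_holds k) Y Y0 A.

Definition calAv (Ps : ProbSpace) (G : set (set (Omega Ps))) (k : relation_kind)
    (F : set (Omega Ps -> ereal)) (Y0 : Omega Ps -> ereal) (A : set (Omega Ps)) : Prop :=
  G A /\ exists Y, F Y /\ holds_on Ps (rel_neg k) Y Y0 A.

Definition setI {T} (A B : set T) : set T := fun w => A w /\ B w.
Definition setU {T} (A B : set T) : set T := fun w => A w \/ B w.

From Stdlib Require Import Reals.
Open Scope R_scope.
From Stdlib Require Import Lra Lia ZArith Classical ClassicalEpsilon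
  FunctionalExtensionality PropExtensionality.

(* The family A^|- is closed under countable unions: given sets A_n with
   witnesses Y_n, disjointify the A_n and paste the Y_n along the disjoint
   pieces; the pasting hypothesis puts the pasted variable in F, and it is
   a witness on the union.  Any nonempty family of events closed under
   countable unions has an "essential union" U: a member whose probability
   is the supremum s of the probabilities of the members; then every
   member A satisfies P(A \ U) = 0, since P(U) + P(A \ U) = P(U u A) <= s.
   Take A_M^|- := U and A_M := complement of U.  For Y in F the
   G-measurable set B = {w notin U : not (Y w |> Y0 w)} belongs to A^|-
   (witness Y), so it is null, i.e. Y |> Y0 a.s. on A_M. *)

Lemma set_ext {T} (A B : set T) : (forall w, A w <-> B w) -> A = B.
Proof.
  intro H; apply functional_extensionality; intro w.
  apply propositional_extensionality; apply H.
Qed.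

Section SigmaAlgebra.
Variables (T : Type) (S : set (set T)).
Hypothesis HS : is_sigma_algebra S.

Lemma sa_ext (A B : set T) : (forall w, A w <-> B w) -> S A -> S B.
Proof. intros H HA; rewrite <- (set_ext A B H); exact HA. Qed.

Lemma sa_empty : S (fun _ => False).
Proof.
  apply (sa_ext (fun w => ~ True)); [tauto|].
  apply (sa_compl _ HS), (sa_full _ HS).
Qed.

Lemma sa_of_compl (A : set T) : S (fun w => ~ A w) -> S A.
Proof.
  intro H; apply (sa_ext (fun w => ~ ~ A w)).
  - intro w; split; [apply NNPP | tauto].
  - apply (sa_compl _ HS), H.
Qed.

Lemma sa_union2 (A B : set T) : S A -> S B -> S (fun w => A w \/ B w).
Proof.
  intros HA HB.
  apply (sa_ext (fun w => exists n : nat, (match n with O => A | _ => B end) w)).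
  - intro w; split.
    + intros [[|n] Hn]; auto.
    + intros [H | H]; [exists O | exists 1%nat]; exact H.
  - apply (sa_union _ HS); intros [|n]; assumption.
Qed.

Lemma sa_inter2 (A B : set T) : S A -> S B -> S (fun w => A w /\ B w).
Proof.
  intros HA HB; apply sa_of_compl.
  apply (sa_ext (fun w => ~ A w \/ ~ B w)).
  - intro w; split; [tauto|].
    intro H; destruct (classic (A w)); [right | left]; tauto.
  - apply sa_union2; apply (sa_compl _ HS); assumption.
Qed.

Lemma sa_unionZ (A : Z -> set T) : (forall z, S (A z)) -> S (fun w => exists z, A z w).
Proof.
  intro H.
  apply (sa_ext (fun w => exists n : nat, A (Z.of_nat n) w \/ A (- Z.of_nat n)%Z w)).
  - intro w; split.
    + intros [n [Hn | Hn]]; eauto.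
    + intros [z Hz]; exists (Z.abs_nat z).
      destruct (Z_le_gt_dec 0 z); [left | right];
        [rewrite Nat2Z.inj_abs_nat, Z.abs_eq by lia
        |rewrite Nat2Z.inj_abs_nat, Z.abs_neq, Z.opp_involutive by lia]; exact Hz.
  - apply (sa_union _ HS); intro n; apply sa_union2; apply H.
Qed.

Definition disj (A : nat -> set T) (n : nat) : set T :=
  fun w => A n w /\ forall j, (j < n)%nat -> ~ A j w.

Lemma disj_meas (A : nat -> set T) : (forall n, S (A n)) -> forall n, S (disj A n).
Proof.
  intros HA n; apply sa_inter2; [apply HA|].
  apply (sa_ext (fun w => ~ exists j, (j < n)%nat /\ A j w)).
  - intro w; split.
    + intros H j Hj HAj; apply H; eauto.
    + intros H [j [Hj HAj]]; exact (H j Hj HAj).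
  - apply (sa_compl _ HS), (sa_union _ HS); intro j.
    destruct (lt_dec j n).
    + apply (sa_ext (A j)); [intro; tauto | apply HA].
    + apply (sa_ext (fun _ => False)); [intro; tauto | apply sa_empty].
Qed.

End SigmaAlgebra.
Arguments disj {T} A n w.

Lemma disj_disjoint {T} (A : nat -> set T) m n w :
  m <> n -> disj A m w -> disj A n w -> False.
Proof.
  intros Hmn [Hm Hm'] [Hn Hn'].
  destruct (Nat.lt_total m n) as [H | [H | H]]; [exact (Hn' m H Hm) | lia | exact (Hm' n H Hn)].
Qed.

Lemma disj_cover {T} (A : nat -> set T) w n : A n w -> exists m, (m <= n)%nat /\ disj A m w.
Proof.
  induction n as [n IH] using lt_wf_ind; intro H.
  destruct (classic (exists j, (j < n)%nat /\ A j w)) as [[j [Hj HAj]] | Hn].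
  - destruct (IH j Hj HAj) as [m [Hm Hd]]; exists m; split; [lia | exact Hd].
  - exists n; split; [lia|]; split; [exact H|].
    intros j Hj HAj; apply Hn; eauto.
Qed.

(** The order of R u {+oo} and measurability of comparisons *)

Lemma ele_trans x y z : ele x y -> ele y z -> ele x z.
Proof. destruct x, y, z; simpl; intros; try lra; tauto. Qed.

Lemma ele_refl x : ele x x.
Proof. destruct x; simpl; [lra | exact I]. Qed.

Lemma ele_antisym x y : ele x y -> ele y x -> x = y.
Proof. destruct x, y; simpl; intros; try contradiction; try reflexivity; f_equal; lra. Qed.

(* A countable grid of reals that is dense in R. *)
Definition grid (n : nat) (z : Z) : R := IZR z / INR n.

Lemma grid_between (a b : R) : b < a -> exists n z, b <= grid n z < a.
Proof.
  intro Hba.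
  destruct (archimed_cor1 (a - b)) as [N [HN Hpos]]; [lra|].
  assert (HNpos : 0 < INR N) by (apply lt_0_INR; exact Hpos).
  destruct (archimed (b * INR N)) as [Hup1 Hup2].
  exists N, (up (b * INR N)).
  assert (Hq : grid N (up (b * INR N)) * INR N = IZR (up (b * INR N)))
    by (unfold grid; field; lra).
  assert (Hinv : INR N * / INR N = 1) by (field; lra).
  split; nra.
Qed.

Lemma not_ele_grid x y :
  ~ ele x y <-> exists n z, ele y (Fin (grid n z)) /\ ~ ele x (Fin (grid n z)).
Proof.
  split.
  - destruct x as [a|], y as [b|]; simpl; intro H; try tauto.
    + destruct (grid_between a b) as [n [z Hq]]; [lra|].
      exists n, z; simpl; split; lra.
    + destruct (grid_between (b + 1) b) as [n [z Hq]]; [lra|].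
      exists n, z; simpl; split; [lra | tauto].
  - intros [n [z [Hy Hx]]] H; apply Hx; exact (ele_trans _ _ _ H Hy).
Qed.

Section Comparisons.
Variables (T : Type) (G : set (set T)).
Hypothesis HG : is_sigma_algebra G.
Variables Y1 Y2 : T -> ereal.
Hypotheses (HY1 : L0bar G Y1) (HY2 : L0bar G Y2).

(* For G-measurable Y1 Y2, {Y1 > Y2} is a countable union of the sets
   {Y2 <= q} n {Y1 > q} over grid points q, hence G-measurable. *)
Lemma meas_not_ele : G (fun w => ~ ele (Y1 w) (Y2 w)).
Proof.
  apply (sa_ext _ G (fun w => exists n : nat, exists z,
           ele (Y2 w) (Fin (grid n z)) /\ ~ ele (Y1 w) (Fin (grid n z)))).
  - intro w; rewrite not_ele_grid; tauto.
  - apply (sa_union _ HG); intro n; apply sa_unionZ; [exact HG|]; intro z.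
    apply sa_inter2; [exact HG | apply HY2 | apply (sa_compl _ HG), HY1].
Qed.

Lemma meas_ele : G (fun w => ele (Y1 w) (Y2 w)).
Proof. apply sa_of_compl; [exact HG | exact meas_not_ele]. Qed.

End Comparisons.

(* {Y1 <> Y2} = {Y1 > Y2} u {Y2 > Y1}. *)
Lemma meas_neq {T} (G : set (set T)) (HG : is_sigma_algebra G) (Y1 Y2 : T -> ereal) :
  L0bar G Y1 -> L0bar G Y2 -> G (fun w => Y1 w <> Y2 w).
Proof.
  intros H1 H2.
  apply (sa_ext _ G (fun w => ~ ele (Y1 w) (Y2 w) \/ ~ ele (Y2 w) (Y1 w))).
  - intro w; split.
    + intros [H | H] E; apply H; rewrite E; apply ele_refl.
    + intro H; apply NNPP; intro H'; apply H, ele_antisym; apply NNPP; tauto.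
  - apply sa_union2; [exact HG | |]; apply meas_not_ele; assumption.
Qed.

Lemma meas_rel_neg {T} (G : set (set T)) (HG : is_sigma_algebra G) k (Y Y0 : T -> ereal) :
  L0bar G Y -> L0bar G Y0 -> G (fun w => rel_neg k (Y w) (Y0 w)).
Proof.
  intros HY HY0; apply (sa_compl _ HG).
  destruct k; unfold rel_holds, elt.
  - apply meas_ele; assumption.
  - apply meas_ele; assumption.
  - apply sa_of_compl; [exact HG | apply meas_neq; assumption].
  - apply sa_inter2; [exact HG | apply meas_ele | apply meas_neq]; assumption.
  - apply sa_inter2; [exact HG | apply meas_ele | apply meas_neq]; assumption.
Qed.

(** Elementary properties of the probability *)

Lemma infinite_sum_eventually_const (a : nat -> R) (l : R) (n0 : nat) :
  (forall n, (n0 <= n)%nat -> sum_f_R0 a n = l) -> infinite_sum a l.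
Proof.
  intros H eps Heps; exists n0; intros n Hn.
  rewrite (H n Hn); unfold R_dist; rewrite Rminus_diag, Rabs_R0; exact Heps.
Qed.

Section Probability.
Variable Ps : ProbSpace.
Let HF : is_sigma_algebra (Fsig Ps) := Fsig_sigma Ps.

Lemma Prob_ext (A B : set (Omega Ps)) : (forall w, A w <-> B w) -> Prob Ps A = Prob Ps B.
Proof. intro H; rewrite (set_ext A B H); reflexivity. Qed.

(* The series c + c + ... can only converge to c when c = 0. *)
Lemma Prob_empty : Prob Ps (fun _ => False) = 0.
Proof.
  assert (Hsum : infinite_sum (fun _ => Prob Ps (fun _ => False))
                   (Prob Ps (fun w => exists _ : nat, False))).
  { apply (Prob_sigma_additive Ps (fun _ _ => False)).
    - intro; apply sa_empty, HF.
    - intros m n w _ [] _. }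
  rewrite (Prob_ext (fun w => exists _ : nat, False) (fun _ => False)) in Hsum by (intro; split; [intros [_ []] | tauto]).
  set (c := Prob Ps (fun _ => False)) in *.
  apply NNPP; intro Hc.
  destruct (Hsum (Rabs c / 2)) as [N HN]; [apply Rabs_pos_lt in Hc; lra|].
  pose proof (HN N (le_n N)) as H1; pose proof (HN (S N) (le_S _ _ (le_n N))) as H2.
  unfold R_dist in *; rewrite tech5 in H2.
  revert H1 H2; set (s := sum_f_R0 (fun _ => c) N).
  unfold Rabs; repeat destruct Rcase_abs; intros; lra.
Qed.

(* Finite additivity, from sigma-additivity on A, B, empty, empty, ... *)
Lemma Prob_add (A B : set (Omega Ps)) : Fsig Ps A -> Fsig Ps B -> (forall w, A w -> B w -> False) ->
  Prob Ps (fun w => A w \/ B w) = Prob Ps A + Prob Ps B.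
Proof.
  intros HA HB HAB.
  set (C := fun n : nat => match n with O => A | 1%nat => B | _ => fun _ => False end).
  assert (Hsum : infinite_sum (fun n => Prob Ps (C n)) (Prob Ps (fun w => exists n, C n w))).
  { apply (Prob_sigma_additive Ps).
    - intros [|[|n]]; simpl; [exact HA | exact HB | apply sa_empty, HF].
    - intros [|[|m]] [|[|n]] w Hmn H1 H2; simpl in *; try contradiction; try lia; eauto. }
  rewrite (Prob_ext _ (fun w => exists n, C n w)).
  - apply (uniqueness_sum _ _ _ Hsum), (infinite_sum_eventually_const _ _ 1%nat).
    intros [|n] Hn; [lia|]; induction n as [|n IH]; [reflexivity|].
    rewrite tech5, IH by lia; simpl; rewrite Prob_empty; ring.
  - intro w; split.
    + intros [H | H]; [exists O | exists 1%nat]; exact H.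
    + intros [[|[|n]] Hn]; simpl in Hn; tauto.
Qed.

(* Monotonicity: P B = P A + P (B \ A) when A is contained in B. *)
Lemma Prob_mono (A B : set (Omega Ps)) : Fsig Ps A -> Fsig Ps B -> (forall w, A w -> B w) -> Prob Ps A <= Prob Ps B.
Proof.
  intros HA HB HAB.
  assert (HD : Fsig Ps (fun w => B w /\ ~ A w))
    by (apply sa_inter2; [exact HF | exact HB | apply (sa_compl _ HF), HA]).
  assert (E : Prob Ps B = Prob Ps A + Prob Ps (fun w => B w /\ ~ A w)).
  { rewrite <- Prob_add by (auto; tauto); apply Prob_ext.
    intro w; destruct (classic (A w)); intuition. }
  pose proof (Prob_nonneg Ps _ HD); lra.
Qed.

Lemma Prob_null_union (N : nat -> set (Omega Ps)) :
  (forall n, Fsig Ps (N n)) -> (forall n, Prob Ps (N n) = 0) ->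
  Fsig Ps (fun w => exists n, N n w) /\ Prob Ps (fun w => exists n, N n w) = 0.
Proof.
  intros HN HP0; split; [apply (sa_union _ HF), HN|].
  pose proof (disj_meas _ _ HF N HN) as HD.
  assert (HD0 : forall n, Prob Ps (disj N n) = 0).
  { intro n; pose proof (Prob_mono _ _ (HD n) (HN n) (fun w h => proj1 h)).
    pose proof (Prob_nonneg Ps _ (HD n)); rewrite HP0 in *; lra. }
  rewrite (Prob_ext _ (fun w => exists n, disj N n w)).
  - apply (uniqueness_sum (fun n => Prob Ps (disj N n))).
    + exact (Prob_sigma_additive Ps _ HD (disj_disjoint N)).
    + apply (infinite_sum_eventually_const _ _ 0); intros n _.
      rewrite (sum_eq _ (fun _ => 0)) by (intros; apply HD0).
      rewrite sum_cte; ring.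
  - intro w; split; intros [n Hn].
    + destruct (disj_cover N w n Hn) as [m [_ Hm]]; eauto.
    + exists n; apply Hn.
Qed.

End Probability.

Lemma holds_on_everywhere Ps R0 (Y Y0 : Omega Ps -> ereal) (A : set (Omega Ps)) :
  (forall w, A w -> R0 (Y w) (Y0 w)) -> holds_on Ps R0 Y Y0 A.
Proof.
  intro H; exists (fun _ => False); repeat split.
  - apply sa_empty, Fsig_sigma.
  - apply Prob_empty.
  - intros w Hw _; exact (H w Hw).
Qed.

Lemma holds_on_countable_union Ps R0 (Y : nat -> Omega Ps -> ereal) (Z Y0 : Omega Ps -> ereal)
    (A : nat -> set (Omega Ps)) :
  (forall n, holds_on Ps R0 (Y n) Y0 (A n)) ->
  (forall w, (exists n, A n w) -> exists m, A m w /\ Z w = Y m w) ->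
  holds_on Ps R0 Z Y0 (fun w => exists n, A n w).
Proof.
  intros HY HZ.
  destruct (choice _ HY) as [N HN].
  destruct (Prob_null_union Ps N) as [HNm HN0];
    [intro n; apply (HN n) | intro n; apply (HN n)|].
  exists (fun w => exists n, N n w); split; [exact HNm|]; split; [exact HN0|].
  intros w Hw HnN; destruct (HZ w Hw) as [m [Hm ->]].
  apply (HN m); [exact Hm|]; intro h; apply HnN; exists m; exact h.
Qed.

Lemma pasting_exists {T} (A : nat -> set T) (Y : nat -> T -> ereal) :
  (forall i j w, i <> j -> A i w -> A j w -> False) ->
  exists Z : T -> ereal,
    (forall i w, A i w -> Z w = Y i w) /\ (forall w, (forall i, ~ A i w) -> Z w = Fin 0).
Proof.
  intro Hdisj.
  assert (Hval : forall w, exists z : ereal,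
             (forall i, A i w -> z = Y i w) /\ ((forall i, ~ A i w) -> z = Fin 0)).
  { intro w; destruct (classic (exists i, A i w)) as [[i Hi] | Hno].
    - exists (Y i w); split.
      + intros j Hj; destruct (Nat.eq_dec i j) as [-> | Hij];
          [reflexivity | destruct (Hdisj i j w Hij Hi Hj)].
      + intro H; destruct (H i Hi).
    - exists (Fin 0); split; [intros i Hi; destruct (Hno (ex_intro _ i Hi)) | reflexivity]. }
  destruct (choice _ Hval) as [Z HZ].
  exists Z; split; intros; apply HZ; assumption.
Qed.

(** Essential unions *)

Lemma essential_union (Ps : ProbSpace) (C : set (set (Omega Ps))) :
  (forall A, C A -> Fsig Ps A) ->
  (exists A, C A) ->
  (forall A : nat -> set (Omega Ps), (forall n, C (A n)) -> C (fun w => exists n, A n w)) ->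
  exists U, C U /\ forall A, C A -> Prob Ps (fun w => A w /\ ~ U w) = 0.
Proof.
  intros HCm [A0 HA0] HCunion.
  pose proof (Fsig_sigma Ps) as HF.
  set (probs := fun x => exists A, C A /\ x = Prob Ps A).
  destruct (completeness probs) as [s [Hub Hlub]].
  { exists 1; intros x [A [HA ->]]; rewrite <- (Prob_full Ps).
    apply Prob_mono; [apply HCm, HA | apply (sa_full _ HF) | tauto]. }
  { exists (Prob Ps A0), A0; auto. }
  (* members of C with probability > s - 1/(n+1); their union U attains s *)
  assert (Happrox : forall n : nat, exists A, C A /\ s - / INR (S n) < Prob Ps A).
  { intro n; apply NNPP; intro Hno.
    assert (Heps : 0 < / INR (S n)) by (apply Rinv_0_lt_compat, lt_0_INR; lia).
    assert (s <= s - / INR (S n)); [|lra].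
    apply Hlub; intros x [A [HA ->]].
    apply Rnot_lt_le; intro Hlt; apply Hno; eauto. }
  destruct (choice _ Happrox) as [An HAn].
  set (U := fun w => exists n, An n w).
  assert (HU : C U) by (apply HCunion; intro n; apply HAn).
  assert (HUm : Fsig Ps U) by (apply HCm, HU).
  assert (HUs : Prob Ps U = s).
  { apply Rle_antisym; [apply Hub; exists U; auto|].
    apply Rnot_lt_le; intro Hlt.
    destruct (archimed_cor1 (s - Prob Ps U)) as [N [HN HNpos]]; [lra|].
    replace N with (S (N - 1)) in HN by lia.
    pose proof (Prob_mono Ps (An (N - 1)%nat) U (HCm _ (proj1 (HAn _))) HUm
                  (fun w h => ex_intro _ (N - 1)%nat h)).
    pose proof (proj2 (HAn (N - 1)%nat)); lra. }
  exists U; split; [exact HU|]; intros A HA.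
  (* P U + P (A \ U) = P (U u A) <= s = P U *)
  set (UA := fun n : nat => match n with O => U | _ => A end).
  assert (HUA : Prob Ps (fun w => exists n, UA n w) <= s)
    by (apply Hub; exists (fun w => exists n, UA n w); split; [apply HCunion; intros [|n]; assumption | reflexivity]).
  assert (HAm : Fsig Ps (fun w => A w /\ ~ U w))
    by (apply sa_inter2; [exact HF | apply HCm, HA | apply (sa_compl _ HF), HUm]).
  rewrite (Prob_ext Ps _ (fun w => U w \/ (A w /\ ~ U w))), Prob_add in HUA;
    [| exact HUm | exact HAm | tauto |].
  - pose proof (Prob_nonneg Ps _ HAm); lra.
  - intro w; split.
    + intros [[|n] Hn]; [left; exact Hn|]; destruct (classic (U w)); tauto.
    + intros [H | [H _]]; [exists O | exists 1%nat]; exact H.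
Qed.

Lemma holds_on_sub Ps R0 (Y Y0 : Omega Ps -> ereal) (A B : set (Omega Ps)) :
  holds_on Ps R0 Y Y0 A -> (forall w, B w -> A w) -> holds_on Ps R0 Y Y0 B.
Proof. intros [N [HN [HN0 H]]] HBA; exists N; repeat split; auto. Qed.

(* The pasting hypothesis of Theorem 7: F contains sum_i Y_i 1_{A_i} for
   pairwise disjoint A_i in A^|- and Y_i in F with Y_i <| Y0 on A_i. *)
Definition closed_under_pasting (Ps : ProbSpace) (G : set (set (Omega Ps)))
    (k : relation_kind) (F : set (Omega Ps -> ereal)) (Y0 : Omega Ps -> ereal) : Prop :=
  forall (A : nat -> set (Omega Ps)) (Y : nat -> Omega Ps -> ereal),
    (forall i, calAv Ps G k F Y0 (A i)) ->
    (forall i j w, i <> j -> A i w -> A j w -> False) ->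
    (forall i, F (Y i)) ->
    (forall i, holds_on Ps (rel_neg k) (Y i) Y0 (A i)) ->
    forall Z : Omega Ps -> ereal,
      (forall i w, A i w -> Z w = Y i w) ->
      (forall w, (forall i, ~ A i w) -> Z w = Fin 0) ->
      F Z.

(* Under the pasting hypothesis A^|- is closed under countable unions: the
   witnesses of the disjointified pieces paste into a witness on the union. *)
Lemma calAv_countable_union Ps G k F Y0 :
  is_sigma_algebra G -> closed_under_pasting Ps G k F Y0 ->
  forall A : nat -> set (Omega Ps),
    (forall n, calAv Ps G k F Y0 (A n)) -> calAv Ps G k F Y0 (fun w => exists n, A n w).
Proof.
  intros HG Hpaste A HA.
  destruct (choice _ (fun n => proj2 (HA n))) as [Y HY].
  assert (HYD : forall n, holds_on Ps (rel_neg k) (Y n) Y0 (disj A n))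
    by (intro n; apply (holds_on_sub _ _ _ _ (A n)); [apply HY | intros w Hw; apply Hw]).
  assert (HD : forall n, calAv Ps G k F Y0 (disj A n)).
  { intro n; split; [apply (disj_meas _ _ HG); intro; apply HA|].
    exists (Y n); split; [apply HY | apply HYD]. }
  destruct (pasting_exists (disj A) Y (disj_disjoint A)) as [Z [HZ HZ0]].
  split; [apply (sa_union _ HG); intro; apply HA|].
  exists Z; split.
  - exact (Hpaste (disj A) Y HD (disj_disjoint A) (fun n => proj1 (HY n)) HYD Z HZ HZ0).
  - apply (holds_on_countable_union Ps _ Y); [intro n; apply HY|].
    intros w [n Hn]; destruct (disj_cover A w n Hn) as [m [_ Hm]].
    exists m; split; [apply Hm | apply HZ, Hm].
Qed.

Theorem mainTheorem7 (Ps : ProbSpace) (G : set (set (Omega Ps)))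
  (k : relation_kind) (F : set (Omega Ps -> ereal)) (Y0 : Omega Ps -> ereal) :
  sub_sigma_algebra Ps G ->
  (forall Y, F Y -> L0bar G Y) ->
  L0bar G Y0 ->
  (exists Y, F Y) ->
  (* closure of F under countable pastings sum_i Y_i 1_{A_i} *)
  (forall (A : nat -> set (Omega Ps)) (Y : nat -> Omega Ps -> ereal),
     (forall i, calAv Ps G k F Y0 (A i)) ->
     (forall i j w, i <> j -> A i w -> A j w -> False) ->
     (forall i, F (Y i)) ->
     (forall i, holds_on Ps (rel_neg k) (Y i) Y0 (A i)) ->
     forall Z : Omega Ps -> ereal,
       (forall i w, A i w -> Z w = Y i w) ->
       (forall w, (forall i, ~ A i w) -> Z w = Fin 0) ->
       F Z) ->
  exists AM AMv : set (Omega Ps),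
    calA Ps G k F Y0 AM /\ calAv Ps G k F Y0 AMv /\
    Prob Ps (setI AM AMv) = 0 /\ Prob Ps (setU AM AMv) = 1.
Proof.
  intros [HG HGF] HFm HY0 [Y1 HY1] Hpaste.
  (* A_M^|- is an essential union of A^|-. *)
  destruct (essential_union Ps (calAv Ps G k F Y0)) as [U [HU Hmax]].
  - intros A HA; apply HGF, HA.
  - exists (fun _ => False); split; [apply sa_empty, HG|].
    exists Y1; split; [exact HY1 | apply holds_on_everywhere; tauto].
  - exact (calAv_countable_union Ps G k F Y0 HG Hpaste).
  - exists (fun w => ~ U w), U; split; [split|split; [exact HU | split]].
    + apply (sa_compl _ HG), HU.
    + (* the set where Y <| Y0 off U belongs to A^|-, hence is null *)
      intros Y HY.
      set (B := fun w => ~ U w /\ rel_neg k (Y w) (Y0 w)).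
      assert (HBG : G B)
        by (apply sa_inter2; [exact HG | apply (sa_compl _ HG), HU | apply meas_rel_neg; auto]).
      assert (HB : calAv Ps G k F Y0 B)
        by (split; [exact HBG | exists Y; split; [exact HY | apply holds_on_everywhere; intros w Hw; apply Hw]]).
      exists (fun w => B w /\ ~ U w); split; [|split; [exact (Hmax B HB)|]].
      * apply HGF, sa_inter2; [exact HG | exact HBG | apply (sa_compl _ HG), HU].
      * intros w HnU HnB; apply NNPP; intro Hneg; apply HnB; split; [split|]; assumption.
    + rewrite (Prob_ext Ps _ (fun _ => False)) by (unfold setI; tauto); apply Prob_empty.
    + rewrite (Prob_ext Ps _ (fun _ => True)), Prob_full; [reflexivity|].
      intro w; unfold setU; split; [tauto | intros _; destruct (classic (U w)); tauto].
Qed.
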